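(* For any integers $n\ge1$ and $k\ge1$ there exists a divisor $d\mid n$ with $d\le n^{1/2^k}$ such that \[ \tau(n)\le 2^{2^k-1}\tau(d)^{2^k}. \]
   Context: $\tau$ denotes the number-of-divisors function. *)

From mathcomp Require Import all_boot.
Definition tau (n : nat) : nat := size (divisors n).

From mathcomp Require Import all_boot.
From mathcomp Require Import zify.

(* For k = 1: peel off the smallest prime p of n, with multiplicity a.  If
   a >= 2, take p^(a/2) times a good divisor of the cofactor, using
   a + 1 <= 2 (a/2 + 1) <= (a/2 + 1)^2.  If a = 1, remove also the smallest
   prime q >= p of the cofactor and take p times a good divisor of what
   remains: p^2 <= p q pays for the square, and the factor 4 lost in tau is
   recovered as tau (p d)^2 = 4 tau d^2.  General k follows by iterating the
   case k = 1, since 2 (2^k - 1) + 1 = 2^(k+1) - 1. *)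

Lemma tau_coprime m n :
  0 < m -> 0 < n -> coprime m n -> tau (m * n) = tau m * tau n.
Proof.
move=> m_gt0 n_gt0 co_mn.
have mn_gt0 : 0 < m * n by rewrite muln_gt0 m_gt0.
(* d |-> (gcdn d m, gcdn d n) inverts (a, b) |-> a * b *)
rewrite /tau -(size_allpairs muln); apply/perm_size/uniq_perm.
- exact: divisors_uniq.
- have gcd_mul a b : a %| m -> b %| n -> gcdn m (a * b) = a /\ gcdn n (a * b) = b.
    move=> am bn; split.
      by rewrite Gauss_gcdl; [apply/gcdn_idPr | apply: coprime_dvdr bn co_mn].
    rewrite mulnC Gauss_gcdl; first exact/gcdn_idPr.
    by rewrite coprime_sym; apply: coprime_dvdl am co_mn.
  apply: allpairs_uniq; try exact: divisors_uniq.
  move=> _ _ /allpairsP[[a1 b1] [/= + + ->]] /allpairsP[[a2 b2] [/= + + ->]] /= E.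
  rewrite -!dvdn_divisors // => a1m b1n a2m b2n.
  have [ga1 gb1] := gcd_mul _ _ a1m b1n; have [ga2 gb2] := gcd_mul _ _ a2m b2n.
  by congr (_, _); [rewrite -ga1 E ga2 | rewrite -gb1 E gb2].
- move=> d; rewrite -dvdn_divisors //; apply/idP/allpairsP => [dn | [[a b]]].
    exists (gcdn d m, gcdn d n); rewrite /= -!dvdn_divisors // !dvdn_gcdr.
    split=> //; apply/eqP; rewrite eqn_dvd Gauss_dvd ?dvdn_gcdl ?andbT.
      by rewrite muln_gcdl dvdn_gcd dvdn_mulr //= muln_gcdr dvdn_gcd dvdn_mull.
    by apply: (coprime_dvdl (dvdn_gcdr _ _)); apply: (coprime_dvdr (dvdn_gcdr _ _)).
  by rewrite /= -!dvdn_divisors // => -[am bn ->]; apply: dvdn_mul.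
Qed.

Lemma tau_pfactor p a : prime p -> tau (p ^ a) = a.+1.
Proof.
move=> p_pr; rewrite /tau -(size_iota 0 a.+1) -(size_map (expn p) (iota 0 a.+1)).
apply/perm_size/uniq_perm; first exact: divisors_uniq.
  rewrite map_inj_uniq ?iota_uniq // => i j /eqP.
  by rewrite eqn_exp2l ?prime_gt1 // => /eqP.
move=> d; rewrite -dvdn_divisors ?expn_gt0 ?prime_gt0 //.
apply/(dvdn_pfactor _ _ p_pr)/mapP => -[e].
  by move=> ea ->; exists e; rewrite ?mem_iota.
by rewrite mem_iota => /andP[_ ea] ->; exists e.
Qed.

Lemma tau_pfactor_mul p a m :
  prime p -> 0 < m -> coprime p m -> tau (p ^ a * m) = a.+1 * tau m.
Proof.
move=> p_pr m_gt0 co_pm.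
by rewrite tau_coprime ?tau_pfactor ?coprimeXl // expn_gt0 prime_gt0.
Qed.

Lemma tau_prime_mul p m : prime p -> 0 < m -> coprime p m -> tau (p * m) = 2 * tau m.
Proof. by move=> p_pr m_gt0 co_pm; rewrite -{1}[p]expn1 tau_pfactor_mul. Qed.

Lemma tau_prime_mul_leq p m : prime p -> 0 < m -> tau (p * m) <= 2 * tau m.
Proof.
move=> p_pr m_gt0; have [m' co_pm' Em] := pfactor_coprime p_pr m_gt0.
have m'_gt0 : 0 < m' by move: m_gt0; rewrite Em muln_gt0 => /andP[].
rewrite Em mulnCA -expnS !(mulnC m') !tau_pfactor_mul //; nia.
Qed.

Definition sqrt_tau_divisor n d := [/\ d %| n, d * d <= n & tau n <= 2 * tau d ^ 2].

Lemma sqrt_tau_divisor_pfactor_mul p a m d :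
  prime p -> 0 < m -> coprime p m -> 1 < a ->
  sqrt_tau_divisor m d -> sqrt_tau_divisor (p ^ a * m) (p ^ a./2 * d).
Proof.
move=> p_pr m_gt0 co_pm a_gt1 [dm ddm tau_m].
have d_gt0 : 0 < d := dvdn_gt0 m_gt0 dm.
have co_pd : coprime p d := coprime_dvdr dm co_pm.
have a_split : a = odd a + a./2 + a./2 by rewrite -addnA addnn odd_double_half.
have p_half : p ^ a./2 * p ^ a./2 <= p ^ a.
  by rewrite -expnD leq_pexp2l ?prime_gt0 //; lia.
split.
- by rewrite dvdn_mul // dvdn_exp2l //; lia.
- by rewrite mulnACA leq_mul.
- rewrite !tau_pfactor_mul // expnMn mulnCA.
  have odd_le1 : odd a <= 1 by case: (odd a).
  have a_le_sq : a.+1 <= a./2.+1 ^ 2 by nia.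
  nia.
Qed.

Lemma sqrt_tau_divisor_primes_mul p q m d :
  prime p -> prime q -> p <= q -> 0 < m -> coprime p (q * m) ->
  sqrt_tau_divisor m d -> sqrt_tau_divisor (p * (q * m)) (p * d).
Proof.
move=> p_pr q_pr pq m_gt0 co_pqm [dm ddm tau_m].
have d_gt0 : 0 < d := dvdn_gt0 m_gt0 dm.
have co_pd : coprime p d by apply: coprime_dvdr co_pqm; rewrite dvdn_mull.
have qm_gt0 : 0 < q * m by rewrite muln_gt0 prime_gt0.
split.
- by rewrite dvdn_pmul2l ?prime_gt0 // dvdn_mull.
- by rewrite mulnACA (mulnA p q) leq_mul // leq_mul2l pq orbT.
- rewrite !(tau_prime_mul p) //.
  have := tau_prime_mul_leq q m q_pr m_gt0; nia.
Qed.

Lemma exists_sqrt_tau_divisor n : 0 < n -> exists d, sqrt_tau_divisor n d.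
Proof.
elim/ltn_ind: n => n IHn n_gt0.
have [n_gt1 | n_le1] := ltnP 1 n; last by exists 1; have -> : n = 1 by lia.
have p_pr := pdiv_prime n_gt1; set p := pdiv n in p_pr *.
have p_gt1 := prime_gt1 p_pr.
have [m co_pm En] := pfactor_coprime p_pr n_gt0.
have a_gt0 : 0 < logn p n by rewrite logn_gt0 mem_primes p_pr n_gt0 pdiv_dvd.
set a := logn p n in En a_gt0.
have m_gt0 : 0 < m by move: n_gt0; rewrite En muln_gt0 => /andP[].
have pa_gt1 : 1 < p ^ a by rewrite (leq_trans p_gt1) // -{1}(expn1 p) leq_exp2l.
have m_lt_n : m < n by rewrite En ltn_Pmulr.
rewrite En mulnC.
have [a_gt1 | a_le1] := ltnP 1 a.
  have [d md] := IHn m m_lt_n m_gt0.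
  by exists (p ^ a./2 * d); apply: sqrt_tau_divisor_pfactor_mul.
have -> : a = 1 by lia.
rewrite expn1.
have [m_gt1 | m_le1] := ltnP 1 m; last first.
  exists 1; have -> : m = 1 by lia.
  by split; rewrite ?muln1 ?dvd1n ?prime_gt0 // -{1}(muln1 p) tau_prime_mul ?coprimen1.
have q_pr := pdiv_prime m_gt1; set q := pdiv m in q_pr *.
have [m' Em] : exists m', m = q * m' by exists (m %/ q); rewrite mulnC divnK ?pdiv_dvd.
have p_le_q : p <= q.
  by apply: pdiv_min_dvd (prime_gt1 q_pr) _; rewrite En dvdn_mulr ?pdiv_dvd.
have m'_gt0 : 0 < m' by move: m_gt0; rewrite Em muln_gt0 => /andP[].
have m'_lt_n : m' < n.
  by apply: leq_ltn_trans m_lt_n; rewrite Em leq_pmull ?prime_gt0.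
have [d m'd] := IHn m' m'_lt_n m'_gt0.
by exists (p * d); rewrite Em; apply: sqrt_tau_divisor_primes_mul; rewrite -?Em.
Qed.

Lemma exists_root_tau_divisor n k : 0 < n ->
  exists d, [/\ d %| n, d ^ 2 ^ k <= n & tau n <= 2 ^ (2 ^ k - 1) * tau d ^ 2 ^ k].
Proof.
move=> n_gt0; elim: k => [|k [d [dn d_root tau_n]]].
  by exists n; rewrite expn0 expn1 mul1n.
have [e [ed ee tau_d]] := exists_sqrt_tau_divisor d (dvdn_gt0 n_gt0 dn).
have K_gt0 : 0 < 2 ^ k by rewrite expn_gt0.
exists e; rewrite expnS !expnM; split.
- exact: dvdn_trans ed dn.
- by apply: leq_trans d_root; rewrite leq_exp2r // -mulnn.
- have -> : 2 * 2 ^ k - 1 = (2 ^ k - 1) + 2 ^ k by lia.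
  rewrite expnD -mulnA -expnMn; apply: leq_trans tau_n _.
  by rewrite leq_mul2l leq_exp2r // tau_d orbT.
Qed.

Theorem mainTheorem6 (n k : nat) (hn : 1 <= n) (hk : 1 <= k) :
  exists d : nat, [/\ d %| n, d ^ (2 ^ k) <= n &
    tau n <= 2 ^ (2 ^ k - 1) * tau d ^ (2 ^ k)].
Proof. exact: exists_root_tau_divisor. Qed.
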